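(* In the setting of the context, assume $\mathbf{A}^{-1}$ exists and $\mathbf{Q}_\Delta$ is given by the LU trick. Then for every $k\in\mathbb{N}$ there exist constants $c>0$, $c'\ge0$ and $\mu^*>0$ such that for all $\mu\ge\mu^*$, $$\Big\|\mathbf{C}\big(\mathbf{I}_{LMN}-\hat{\mathbf{P}}^{-1}\mathbf{C}\big)^k\Big\|\le\mu\Big(c\,\big\|\mathbf{I}_L\otimes(\mathbf{I}_M-\mathbf{Q}_\Delta^{-1}\mathbf{Q})^k\otimes\mathbf{I}_N\big\|+\frac{c'}{\mu}\Big),$$ i.e. the norm is bounded by $\mu\big(c\|\mathbf{I}_L\otimes(\mathbf{I}_M-\mathbf{Q}_\Delta^{-1}\mathbf{Q})^k\otimes\mathbf{I}_N\|+\mathcal{O}(1/\mu)\big)$.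
   Context: Fix positive integers $L,M,N$. $\mathbf{Q}=(q_{m,j})\in\mathbb{R}^{M\times M}$ with $q_{m,j}=\int_0^{\tau_m}\ell_j(s)\,ds$ is the collocation matrix for the (right) Gauss–Radau nodes $0<\tau_1<\dots<\tau_M=1$ on $[0,1]$ ($\ell_j$ Lagrange basis polynomials). LU trick: $\mathbf{Q}^T=\mathbf{L}_Q\mathbf{U}_Q$ with $\mathbf{L}_Q$ unit lower triangular and $\mathbf{U}_Q$ upper triangular, $\mathbf{Q}_\Delta=\mathbf{U}_Q^T$. $\mathbf{A}\in\mathbb{C}^{N\times N}$, $\mu>0$. $\mathbf{N}_M\in\mathbb{R}^{M\times M}$ has ones in its last column and zeros elsewhere, $\mathbf{H}=\mathbf{N}_M\otimes\mathbf{I}_N$, $\mathbf{E}\in\mathbb{R}^{L\times L}$ has ones on the first subdiagonal and zeros elsewhere. $\mathbf{C}=\mathbf{I}_{LMN}-\mu\,\mathbf{I}_L\otimes\mathbf{Q}\otimes\mathbf{A}-\mathbf{E}\otimes\mathbf{H}$, $\hat{\mathbf{P}}=\mathbf{I}_{LMN}-\mu\,\mathbf{I}_L\otimes\mathbf{Q}_\Delta\otimes\mathbf{A}$ (assumed invertible). $\|\cdot\|$ is any induced matrix norm. *)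

From HB Require Import structures.
From mathcomp Require Import all_boot all_order all_algebra.
From mathcomp Require Import complex mxtens.
From mathcomp Require Import classical_sets boolp reals.

Set Implicit Arguments.
Unset Strict Implicit.
Unset Printing Implicit Defensive.
Import Order.TTheory GRing.Theory Num.Theory.
Local Open Scope ring_scope.
Local Open Scope classical_set_scope.

Section SDC.
Variable R : realType.

Definition pint (p : {poly R}) (t : R) : R :=
  \sum_(i < size p) p`_i * t ^+ i.+1 / i.+1%:R.

Definition lagrange (M : nat) (tau : 'I_M -> R) (j : 'I_M) : {poly R} :=
  \prod_(m < M | m != j) (('X - (tau m)%:P) * ((tau j - tau m)^-1)%:P).

(* right Gauss--Radau nodes on [0,1]: 0 < tau_1 < ... < tau_M = 1, and the
   interpolatory quadrature on these nodes is exact for all polynomials of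
   degree <= 2M-2 (maximal degree with the right endpoint fixed). *)
Definition right_radau_nodes (M : nat) (tau : 'I_M -> R) : Prop :=
  [/\ (forall i : 'I_M, 0 < tau i),
      (forall i j : 'I_M, (i < j)%N -> tau i < tau j),
      (forall i : 'I_M, val i = M.-1 -> tau i = 1) &
      (forall p : {poly R}, (size p <= (2 * M).-1)%N ->
         pint p 1 = \sum_(j < M) pint (lagrange tau j) 1 * p.[tau j])].

Definition collocQ (M : nat) (tau : 'I_M -> R) : 'M[R]_M :=
  \matrix_(m, j) pint (lagrange tau j) (tau m).

Definition unit_lower_triangular (n : nat) (X : 'M[R]_n) : Prop :=
  forall i j : 'I_n, ((i < j)%N -> X i j = 0) /\ (i = j -> X i j = 1).

Definition upper_triangular (n : nat) (X : 'M[R]_n) : Prop :=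
  forall i j : 'I_n, (j < i)%N -> X i j = 0.

Definition cmx (m n : nat) (X : 'M[R]_(m, n)) : 'M[R[i]]_(m, n) :=
  map_mx (fun x => (x%:C)%C) X.

Definition NMmx (M : nat) : 'M[R[i]]_M := \matrix_(i, j) (val j == M.-1)%:R.
Definition Emx (L : nat) : 'M[R[i]]_L := \matrix_(i, j) (val i == (val j).+1)%:R.

Definition vector_norm (n : nat) (nu : 'cV[R[i]]_n -> R) : Prop :=
  [/\ (forall x, 0 <= nu x),
      (forall x, nu x = 0 -> x = 0),
      (forall (a : R[i]) x, nu (a *: x) = Normc.normc a * nu x) &
      (forall x y, nu (x + y) <= nu x + nu y)].

Definition opnorm (n : nat) (nu : 'cV[R[i]]_n -> R) (X : 'M[R[i]]_n) : R :=
  sup [set nu (X *m x) | x in [set x | nu x = 1]].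

Definition Cmx (L M N : nat) (Q : 'M[R]_M) (A : 'M[R[i]]_N) (mu : R)
  : 'M[R[i]]_(L * M * N) :=
  1%:M - (mu%:C)%C *: ((1%:M : 'M[R[i]]_L) *t cmx Q *t A)
       - Emx L *t NMmx M *t (1%:M : 'M[R[i]]_N).

Definition Phat (L M N : nat) (QD : 'M[R]_M) (A : 'M[R[i]]_N) (mu : R)
  : 'M[R[i]]_(L * M * N) :=
  1%:M - (mu%:C)%C *: ((1%:M : 'M[R[i]]_L) *t cmx QD *t A).

End SDC.

From Pilot Require Import Defs.
From HB Require Import structures.
From mathcomp Require Import all_boot all_order all_algebra.
From mathcomp Require Import complex mxtens.
From mathcomp Require Import classical_sets boolp reals.
From mathcomp Require Import topology normedtype derive.
From mathcomp Require Import ring lra zify.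

Set Implicit Arguments.
Unset Strict Implicit.
Unset Printing Implicit Defensive.
Import Order.TTheory GRing.Theory Num.Theory.
Import numFieldNormedType.Exports.
Local Open Scope ring_scope.

(* Let B = I ⊗ Q_Δ ⊗ A, D = I ⊗ Q ⊗ A and F = E ⊗ H, so that P̂ = I - μB and
   C = I - μD - F, and let K = I - B⁻¹D = I ⊗ (I - Q_Δ⁻¹Q) ⊗ I.  Since B is
   invertible, ‖P̂⁻¹‖ ≤ 2‖B⁻¹‖/μ for large μ, and the identity
   (I - P̂⁻¹C) - K = P̂⁻¹(F - K) shows that the iteration matrix T = I - P̂⁻¹C
   is within O(1/μ) of K; telescoping gives ‖T^k - K^k‖ = O(1/μ).  Then
   C T^k = (I - F) T^k - μ D K^k - μ D (T^k - K^k) yields the bound with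
   c = ‖D‖ + 1.  Q_Δ is invertible because Q is: if Σ_j w_j q_{m,j} = 0 for
   all m, the antiderivative of Σ_j w_j ℓ_j has degree ≤ M and vanishes at 0
   and at the M nodes.  Finally, operator norms are finite because any norm
   on C^n dominates the coordinates, by compactness of the unit sphere. *)

Section ComplexModulus.
Variable R : realType.
Local Notation normc := (@Normc.normc R).

Lemma normc_ge0 (z : R[i]) : 0 <= normc z.
Proof. by case: z => a b; exact: sqrtr_ge0. Qed.

Lemma normc_real (r : R) : normc r%:C%C = `|r|.
Proof. by rewrite /= expr0n /= addr0 sqrtr_sqr. Qed.

Lemma normc_le_Re_Im (a b : R) : normc (a +i* b)%C <= `|a| + `|b|.
Proof.
rewrite /= -[`|a| + `|b|]ger0_norm ?addr_ge0 // -sqrtr_sqr ler_wsqrtr //.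
have := real_normK (num_real a); have := real_normK (num_real b).
have := normr_ge0 a; have := normr_ge0 b; nra.
Qed.

End ComplexModulus.

Section VectorNorm.
Variables (R : realType) (n : nat) (nu : 'cV[R[i]]_n -> R).
Hypothesis nu_norm : vector_norm nu.
Local Notation normc := (@Normc.normc R).

Lemma nu_ge0 x : 0 <= nu x. Proof. by case: nu_norm. Qed.
Lemma nu_eq0 x : nu x = 0 -> x = 0. Proof. by case: nu_norm => _ + _ _; apply. Qed.
Lemma nuZ a x : nu (a *: x) = normc a * nu x. Proof. by case: nu_norm. Qed.
Lemma nuD x y : nu (x + y) <= nu x + nu y. Proof. by case: nu_norm. Qed.

Lemma nu0 : nu 0 = 0.
Proof. by have := nuZ 0 0; rewrite scale0r Normc.normc0 mul0r. Qed.

Lemma nuN x : nu (- x) = nu x.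
Proof. by rewrite -scaleN1r nuZ normcN Normc.normc1 mul1r. Qed.

Lemma nu_gt0 x : x != 0 -> 0 < nu x.
Proof. by move=> x0; rewrite lt_def nu_ge0 andbT; apply: contra_neq x0 => /nu_eq0. Qed.

Lemma nuZ_ge0 (r : R) x : 0 <= r -> nu (r%:C%C *: x) = r * nu x.
Proof. by move=> r0; rewrite nuZ normc_real ger0_norm. Qed.

Lemma nu_normalize x : x != 0 -> nu ((nu x)^-1%:C%C *: x) = 1.
Proof.
by move=> x0; rewrite nuZ_ge0 ?invr_ge0 ?nu_ge0 // mulVf // gt_eqF ?nu_gt0.
Qed.

Lemma nu_sum I (r : seq I) (P : pred I) (F : I -> 'cV_n) :
  nu (\sum_(i <- r | P i) F i) <= \sum_(i <- r | P i) nu (F i).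
Proof.
elim/big_rec2: _ => [|i y1 y2 _ IH]; first by rewrite nu0.
exact: le_trans (nuD _ _) (lerD (lexx _) IH).
Qed.

Lemma nu_mulmx_le (X : 'M_n) x :
  nu (X *m x) <= \sum_i normc (x i 0) * nu (X *m delta_mx i 0).
Proof.
rewrite {1}[x]matrix_sum_delta mulmx_sumr; apply: le_trans (nu_sum _ _ _) _.
by apply: ler_sum => i _; rewrite big_ord1 -scalemxAr nuZ.
Qed.

End VectorNorm.

Section NormEquivalence.
Variables (R : realType) (n : nat) (nu : 'cV[R[i]]_n.+1 -> R).
Hypothesis nu_norm : vector_norm nu.
Local Notation normc := (@Normc.normc R).
Local Notation rV := 'rV[R]_(n.+1 + n.+1).

(* C^n is identified with R^(2n), where the unit sphere is compact. *)
Definition of_Re_Im (v : rV) : 'cV[R[i]]_n.+1 :=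
  \col_i (lsubmx v 0 i +i* rsubmx v 0 i)%C.

Definition Re_Im (x : 'cV[R[i]]_n.+1) : rV :=
  row_mx (\row_i complex.Re (x i 0)) (\row_i complex.Im (x i 0)).

Lemma of_Re_ImK : cancel Re_Im of_Re_Im.
Proof.
move=> x; apply/matrixP => i j; rewrite ord1 mxE row_mxKl row_mxKr !mxE.
by case: (x i 0).
Qed.

Lemma Re_ImK : cancel of_Re_Im Re_Im.
Proof.
move=> v; rewrite -[RHS]hsubmxK; congr row_mx; apply/rowP => i; rewrite !mxE //.
Qed.

Lemma of_Re_ImB v w : of_Re_Im (v - w) = of_Re_Im v - of_Re_Im w.
Proof. by apply/matrixP => i j; rewrite !mxE. Qed.

Lemma of_Re_ImZ (r : R) v : of_Re_Im (r *: v) = r%:C%C *: of_Re_Im v.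
Proof. by apply/matrixP => i j; rewrite !mxE; simpc. Qed.

Lemma row_entry_le_norm k (v : 'rV[R]_k) j : `|v 0 j| <= `|v|.
Proof.
rewrite [leRHS]/Num.Def.normr /= mx_normrE; apply/bigmax_geP; right.
by exists (0, j).
Qed.

Lemma normc_of_Re_Im_le v i : normc (of_Re_Im v i 0) <= 2 * `|v|.
Proof.
rewrite mxE; apply: le_trans (normc_le_Re_Im _ _) _.
by rewrite mulr2n mulrDl mul1r lerD // mxE row_entry_le_norm.
Qed.

Let beta := 2 * \sum_i nu (delta_mx i 0).

Lemma nu_of_Re_Im_le v : nu (of_Re_Im v) <= beta * `|v|.
Proof.
rewrite -[of_Re_Im v]mul1mx; apply: le_trans (nu_mulmx_le nu_norm _ _) _.
rewrite /beta mulrAC mulr_sumr; apply: ler_sum => i _; rewrite mul1mx.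
by apply: ler_wpM2r; [exact: nu_ge0 | exact: normc_of_Re_Im_le].
Qed.

Lemma continuous_nu_of_Re_Im : continuous (nu \o of_Re_Im).
Proof.
have beta_ge0 : 0 <= beta by rewrite mulr_ge0 // sumr_ge0 // => i _; exact: nu_ge0.
have lip v w : `|nu (of_Re_Im v) - nu (of_Re_Im w)| <= beta * `|v - w|.
  apply: le_trans (nu_of_Re_Im_le _); rewrite of_Re_ImB.
  have le_vw := nuD nu_norm (of_Re_Im w) (of_Re_Im v - of_Re_Im w).
  have le_wv := nuD nu_norm (of_Re_Im v) (of_Re_Im w - of_Re_Im v).
  rewrite addrC subrK in le_vw; rewrite addrC subrK -opprB nuN // in le_wv.
  by rewrite ler_norml; apply/andP; split; lra.
move=> v; apply/(@cvgrPdist_lt _ _ _ (nbhs v) (nbhs_filter v)) => e e0.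
have beta1 : 0 < beta + 1 by lra.
near=> w; apply: le_lt_trans (lip v w) _.
have : `|v - w| < e / (beta + 1).
  near: w; apply: (@cvgr_dist_lt _ _ _ (nbhs v) (nbhs_filter v) id v cvg_id).
  exact: divr_gt0.
rewrite ltr_pdivlMr // => vw.
have := normr_ge0 (v - w); nra.
Unshelve. all: by end_near.
Qed.

Let sphere := [set v : rV | `|v| = 1]%classic.

Lemma compact_sphere : compact sphere.
Proof.
apply: bounded_closed_compact.
- rewrite /bounded_set /= /bounded_near; near=> M => x /= ->.
  by near: M; exact: nbhs_pinfty_ge.
- exact: (continuous_closedP (@Num.Def.normr R rV)).1 norm_continuous _ (@closed_eq R 1).
Unshelve. all: by end_near.
Qed.

Lemma normalize_in_sphere (v : rV) : v != 0 -> `|v|^-1 *: v \in sphere.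
Proof.
move=> v0; rewrite inE /sphere /= normrZ normrV ?unitfE ?normr_eq0 //.
by rewrite normr_id mulVf ?normr_eq0.
Qed.

Lemma vector_norm_coord_leS : exists2 a : R, 0 < a &
  forall (x : 'cV[R[i]]_n.+1) i, normc (x i 0) <= a * nu x.
Proof.
have sphere0 : (sphere !=set0)%classic.
  pose u : rV := const_mx 1.
  have u0 : u != 0.
    by apply/eqP => /rowP /(_ (lshift _ 0)); rewrite !mxE; apply/eqP/oner_neq0.
  by exists (`|u|^-1 *: u); have := normalize_in_sphere u0; rewrite inE.
have [c sphere_c c_min] := compact_EVT_min sphere0 compact_sphere
  (continuous_subspaceT continuous_nu_of_Re_Im).
set m := nu (of_Re_Im c).
have m_gt0 : 0 < m.
  apply: nu_gt0 => //; apply/eqP => c0; move: sphere_c.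
  have -> : c = 0.
    by apply: (can_inj Re_ImK); rewrite c0; apply/matrixP => i j; rewrite !mxE.
  by rewrite inE /sphere /= normr0 => /esym/eqP; rewrite oner_eq0.
exists (2 / m); first exact: divr_gt0.
move=> x i; set u := Re_Im x.
have lower : m * `|u| <= nu x.
  have [->|u0] := eqVneq u 0; first by rewrite normr0 mulr0 nu_ge0.
  have := c_min _ (normalize_in_sphere u0); rewrite /= of_Re_ImZ /u of_Re_ImK.
  by rewrite nuZ_ge0 // ?invr_ge0 // -/m -/u mulrC ler_pdivlMr ?normr_gt0.
apply: le_trans (_ : 2 * `|u| <= _).
  by have := normc_of_Re_Im_le u i; rewrite /u of_Re_ImK.
by rewrite -mulrA ler_pM2l // ler_pdivlMl.
Qed.

End NormEquivalence.

Section Tensor.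
Variable K : comPzRingType.

Lemma tensmx11 m p : (1%:M : 'M[K]_m) *t (1%:M : 'M[K]_p) = 1%:M.
Proof.
apply/matrixP => i j.
case: (mxtens_indexP i) => i0 i1; case: (mxtens_indexP j) => j0 j1.
rewrite tensmxE !mxE -natrM mulnb (inj_eq (can_inj (@mxtens_indexK _ _))).
by rewrite xpair_eqE.
Qed.

Lemma tensmxBl m n p q (X Y : 'M[K]_(m, n)) (Z : 'M[K]_(p, q)) :
  (X - Y) *t Z = X *t Z - Y *t Z.
Proof. by apply/matrixP => i j; rewrite !mxE mulrBl. Qed.

Lemma tensmxBr m n p q (X : 'M[K]_(m, n)) (Y Z : 'M[K]_(p, q)) :
  X *t (Y - Z) = X *t Y - X *t Z.
Proof. by apply/matrixP => i j; rewrite !mxE mulrBr. Qed.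

Lemma tens1mx_mul m p q (X X' : 'M[K]_p) (Y Y' : 'M[K]_q) :
  (1%:M : 'M_m) *t X *t Y *m (1%:M *t X' *t Y') = 1%:M *t (X *m X') *t (Y *m Y').
Proof. by rewrite !tensmx_mul mul1mx. Qed.

Lemma tensmxX m p (X : 'M[K]_m) (Y : 'M[K]_p) k : (X *t Y) ^+ k = X ^+ k *t Y ^+ k.
Proof.
elim: k => [|k IH]; first by rewrite !expr0 tensmx11.
by rewrite !exprS -!mulmxE IH tensmx_mul.
Qed.

Lemma mulmx_split_difference n (D F X Y : 'M[K]_n) (c : K) :
  (1%:M - c *: D - F) *m X = (1%:M - F) *m X - c *: (D *m Y) - c *: (D *m (X - Y)).
Proof.
by rewrite !mulmxBl !mul1mx -scalemxAl mulmxBr scalerBr opprB addrA subrK addrAC.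
Qed.

End Tensor.

Lemma vector_norm_coord_le (R : realType) n (nu : 'cV[R[i]]_n -> R) :
  vector_norm nu -> exists2 a : R, 0 < a &
    forall (x : 'cV[R[i]]_n) i, Normc.normc (x i 0) <= a * nu x.
Proof. by case: n nu => [|n] nu nu_norm; [exists 1 => // x [] | exact: vector_norm_coord_leS]. Qed.

Section OperatorNorm.
Variables (R : realType) (n : nat) (nu : 'cV[R[i]]_n -> R).
Hypotheses (n_gt0 : (0 < n)%N) (nu_norm : vector_norm nu).
Local Notation normc := (@Normc.normc R).
Local Notation opn := (opnorm nu).
Local Notation unit_sphere := [set x | nu x = 1]%classic.

Lemma opnorm_set_neq0 X : ([set nu (X *m x) | x in unit_sphere] !=set0)%classic.
Proof.
set e : 'cV[R[i]]_n := delta_mx (Ordinal n_gt0) 0.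
have e0 : e != 0.
  by apply/eqP => /matrixP /(_ (Ordinal n_gt0) 0); rewrite !mxE !eqxx; apply/eqP/oner_neq0.
by eexists; exists ((nu e)^-1%:C%C *: e); first exact: nu_normalize.
Qed.

Lemma opnorm_set_has_sup X : has_sup [set nu (X *m x) | x in unit_sphere].
Proof.
split; first exact: opnorm_set_neq0.
have [a a_gt0 coord_le] := vector_norm_coord_le nu_norm.
exists (a * \sum_i nu (X *m delta_mx i 0)) => _ [x /= x1 <-].
apply: le_trans (nu_mulmx_le nu_norm _ _) _; rewrite mulr_sumr; apply: ler_sum => i _.
by apply: ler_wpM2r; [exact: nu_ge0 | rewrite -[a]mulr1 -x1; exact: coord_le].
Qed.

Lemma opnorm_ub X x : nu (X *m x) <= opn X * nu x.
Proof.
have [->|x0] := eqVneq x 0; first by rewrite mulmx0 !nu0 ?mulr0.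
rewrite mulrC -ler_pdivrMl ?nu_gt0 //.
apply: (sup_upper_bound (opnorm_set_has_sup X)).
exists ((nu x)^-1%:C%C *: x); first exact: nu_normalize.
by rewrite -scalemxAr nuZ_ge0 ?invr_ge0 ?nu_ge0.
Qed.

Lemma opnorm_le X k : (forall x, nu (X *m x) <= k * nu x) -> opn X <= k.
Proof.
move=> X_le; apply: ge_sup; first exact: opnorm_set_neq0.
by move=> _ [x /= x1 <-]; have := X_le x; rewrite x1 mulr1.
Qed.

Lemma opnorm_ge0 X : 0 <= opn X.
Proof.
have [_ [x /= x1 _]] := opnorm_set_neq0 X.
by apply: le_trans (nu_ge0 nu_norm (X *m x)) _; rewrite -[opn X]mulr1 -x1 opnorm_ub.
Qed.

Lemma opnormM X Y : opn (X *m Y) <= opn X * opn Y.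
Proof.
apply: opnorm_le => x; rewrite -mulmxA -mulrA; apply: le_trans (opnorm_ub _ _) _.
by apply: ler_wpM2l; [exact: opnorm_ge0 | exact: opnorm_ub].
Qed.

Lemma opnormD X Y : opn (X + Y) <= opn X + opn Y.
Proof.
apply: opnorm_le => x; rewrite mulmxDl mulrDl; apply: le_trans (nuD nu_norm _ _) _.
by apply: lerD; exact: opnorm_ub.
Qed.

Lemma opnormN X : opn (- X) <= opn X.
Proof. by apply: opnorm_le => x; rewrite mulNmx nuN //; exact: opnorm_ub. Qed.

Lemma opnormB X Y : opn (X - Y) <= opn X + opn Y.
Proof. by apply: le_trans (opnormD _ _) _; rewrite lerD ?opnormN. Qed.

Lemma opnormZ a X : opn (a *: X) <= normc a * opn X.
Proof.
apply: opnorm_le => x; rewrite -scalemxAl nuZ // -mulrA.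
by apply: ler_wpM2l; [exact: normc_ge0 | exact: opnorm_ub].
Qed.

Lemma opnorm1 : opn 1%:M <= 1.
Proof. by apply: opnorm_le => x; rewrite mul1mx mul1r. Qed.

Lemma opnormX X k : opn (X ^+ k) <= opn X ^+ k.
Proof.
elim: k => [|k IH]; first by rewrite !expr0; exact: opnorm1.
rewrite !exprS; apply: le_trans (opnormM _ _) _.
by apply: ler_wpM2l; [exact: opnorm_ge0 | exact: IH].
Qed.

Lemma opnorm_invmx_le X k : X \in unitmx ->
  (forall x, nu x <= k * nu (X *m x)) -> opn (invmx X) <= k.
Proof. by move=> Xu X_ge; apply: opnorm_le => x; rewrite -{2}[x](mulKVmx Xu). Qed.

Lemma opnorm_expB_le (T K : 'M[R[i]]_n) k :
  opn (T ^+ k - K ^+ k) <= k%:R * opn (T - K) * (opn K + opn (T - K)) ^+ k.-1.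
Proof.
set d := opn (T - K); set r := opn K + d.
have [K0 d0] : 0 <= opn K /\ 0 <= d by split; exact: opnorm_ge0.
have T_le : opn T <= r by rewrite -[T](subrK K) addrC opnormD.
have KX_le j : opn (K ^+ j) <= r ^+ j.
  by apply: le_trans (opnormX _ _) _; rewrite lerXn2r ?nnegrE ?addr_ge0 ?lerDl.
elim: k => [|k IH].
  by rewrite !expr0 subrr mul0r; apply: opnorm_le => x; rewrite mul0mx nu0 ?mul0r.
have -> : T ^+ k.+1 - K ^+ k.+1 = (T ^+ k - K ^+ k) *m T + K ^+ k *m (T - K).
  by rewrite !exprSr -!mulmxE mulmxBl mulmxBr addrA subrK.
apply: le_trans (opnormD _ _) _; apply: le_trans (lerD (opnormM _ _) (opnormM _ _)) _.
have -> : k.+1%:R * d * r ^+ k = k%:R * d * r ^+ k.-1 * r + r ^+ k * d.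
  by case: k {IH KX_le} => [|k] /=; rewrite ?exprSr; ring.
by apply: lerD; apply: ler_pM; rewrite ?opnorm_ge0.
Qed.

Section Splitting.
Variables B G D F : 'M[R[i]]_n.
Hypotheses (GB : G *m B = 1%:M) (BG : B *m G = 1%:M).
Let Pmu (mu : R) := 1%:M - mu%:C%C *: B.
Let Cmu (mu : R) := 1%:M - mu%:C%C *: D - F.
(* the limit of the iteration matrix [1 - Pmu^-1 Cmu] as mu grows *)
Let Kinf := 1%:M - G *m D.

Lemma opnorm_resolvent_le mu : 0 < mu -> 2 * opn G <= mu -> Pmu mu \in unitmx ->
  opn (invmx (Pmu mu)) <= 2 * opn G / mu.
Proof.
move=> mu_gt0 mu_ge Pu; apply: opnorm_invmx_le => // x.
have x_le : nu x <= opn G * nu (B *m x).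
  by rewrite -{1}[x]mul1mx -GB -mulmxA opnorm_ub.
have Bx_le : mu * nu (B *m x) <= nu x + nu (Pmu mu *m x).
  rewrite -(nuZ_ge0 nu_norm _ (ltW mu_gt0)) scalemxAl.
  have -> : mu%:C%C *: B *m x = x - Pmu mu *m x.
    by rewrite mulmxBl mul1mx opprB addrC subrK.
  by rewrite -(nuN nu_norm (Pmu mu *m x)) nuD.
set g := opn G in mu_ge x_le *; set b := nu (B *m x) in x_le Bx_le *.
set p := nu (Pmu mu *m x) in Bx_le *.
have [g0 b0] : 0 <= g /\ 0 <= b by split; [exact: opnorm_ge0 | exact: nu_ge0].
have gb_le : g * b <= p.
  have : 0 <= (mu - 2 * g) * b by rewrite mulr_ge0 ?subr_ge0.
  lra.
rewrite mulrAC ler_pdivlMr //.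
have : 0 <= (g * b - nu x) * mu by rewrite mulr_ge0 ?subr_ge0 // ltW.
have : 0 <= g * (nu x + p - mu * b) by rewrite mulr_ge0 ?subr_ge0.
have : 0 <= g * (p - g * b) by rewrite mulr_ge0 ?subr_ge0.
nra.
Qed.

Lemma iteration_mx_sub_limit mu : Pmu mu \in unitmx ->
  (1%:M - invmx (Pmu mu) *m Cmu mu) - Kinf = invmx (Pmu mu) *m (F - Kinf).
Proof.
move=> Pu; set Z := invmx (Pmu mu); set c := mu%:C%C.
have ZG : Z *m G = G + c *: Z.
  have : Z *m Pmu mu *m G = G by rewrite mulVmx // mul1mx.
  rewrite mulmxBr mulmx1 -scalemxAr mulmxBl -scalemxAl -mulmxA BG mulmx1 => ZG.
  by rewrite -[in RHS]ZG subrK.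
rewrite /Kinf !mulmxBr !mulmx1 mulmxA ZG mulmxDl -scalemxAl -scalemxAr.
move: (Z *m D) (Z *m F) (G *m D) => ZD ZF GD.
by apply/matrixP => i j; rewrite !mxE; ring.
Qed.

Let e := 2 * opn G * (opn F + opn Kinf).
Let r := opn Kinf + e.

Lemma splitting_power_estimate k : exists c c' mustar : R,
  [/\ 0 < c, 0 <= c', 0 < mustar &
   forall mu, mustar <= mu -> Pmu mu \in unitmx ->
     opn (Cmu mu *m (1%:M - invmx (Pmu mu) *m Cmu mu) ^+ k)
       <= mu * (c * opn (Kinf ^+ k) + c' / mu)].
Proof.
have [G0 D0 F0 K0] : [/\ 0 <= opn G, 0 <= opn D, 0 <= opn F & 0 <= opn Kinf].
  by split; exact: opnorm_ge0.
have e0 : 0 <= e by rewrite /e !mulr_ge0 ?addr_ge0.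
have r0 : 0 <= r by rewrite /r addr_ge0.
exists (opn D + 1), ((1 + opn F) * r ^+ k + opn D * (k%:R * e * r ^+ k.-1)), (1 + 2 * opn G).
split; [lra | by rewrite addr_ge0 ?mulr_ge0 ?exprn_ge0 ?addr_ge0 | lra |].
move=> mu mu_ge Pu; have [mu_gt0 mu1] : 0 < mu /\ 1 <= mu by split; lra.
set T := 1%:M - invmx (Pmu mu) *m Cmu mu.
have TK_le : opn (T - Kinf) <= e / mu.
  rewrite iteration_mx_sub_limit //; apply: le_trans (opnormM _ _) _.
  apply: le_trans (ler_wpM2r (opnorm_ge0 _) (opnorm_resolvent_le mu_gt0 _ Pu)) _; first lra.
  rewrite /e mulrAC; apply: ler_wpM2r; first by rewrite invr_ge0 ltW.
  by apply: ler_wpM2l; [rewrite mulr_ge0 | exact: opnormB].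
have e_mu_le : e / mu <= e by rewrite ler_pdivrMr // ler_peMr.
have T_le : opn T <= r.
  rewrite -[T](subrK Kinf) addrC; apply: le_trans (opnormD _ _) _.
  by rewrite lerD // (le_trans TK_le).
have TKX_le : opn (T ^+ k - Kinf ^+ k) <= k%:R * (e / mu) * r ^+ k.-1.
  apply: le_trans (opnorm_expB_le _ _ _) _.
  rewrite ler_pM ?mulr_ge0 ?exprn_ge0 ?addr_ge0 ?opnorm_ge0 //; first by rewrite ler_wpM2l.
  by rewrite lerXn2r ?nnegrE ?addr_ge0 ?opnorm_ge0 // lerD // (le_trans TK_le).
rewrite (mulmx_split_difference _ _ _ (Kinf ^+ k)).
have mu_norm : Normc.normc mu%:C%C = mu by rewrite normc_real gtr0_norm.
have KX0 : 0 <= opn (Kinf ^+ k) := opnorm_ge0 _.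
have first_le : opn ((1%:M - F) *m T ^+ k) <= (1 + opn F) * r ^+ k.
  apply: le_trans (opnormM _ _) _; apply: ler_pM; rewrite ?opnorm_ge0 //.
    by apply: le_trans (opnormB _ _) _; rewrite lerD ?opnorm1.
  by apply: le_trans (opnormX _ _) _; rewrite lerXn2r ?nnegrE ?opnorm_ge0.
have second_le : opn (mu%:C%C *: (D *m Kinf ^+ k)) <= mu * (opn D * opn (Kinf ^+ k)).
  apply: le_trans (opnormZ _ _) _; rewrite mu_norm.
  by apply: ler_wpM2l; [exact: ltW | exact: opnormM].
have third_le : opn (mu%:C%C *: (D *m (T ^+ k - Kinf ^+ k)))
                <= opn D * (k%:R * e * r ^+ k.-1).
  apply: le_trans (opnormZ _ _) _; rewrite mu_norm.
  apply: le_trans (ler_wpM2l (ltW mu_gt0) (le_trans (opnormM _ _) (ler_wpM2l D0 TKX_le))) _.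
  rewrite le_eqVlt; apply/orP; left; apply/eqP; field; exact: lt0r_neq0.
apply: le_trans (opnormB _ _) _; apply: le_trans (lerD (opnormB _ _) (lexx _)) _.
rewrite mulrDr [mu * (_ / mu)]mulrC divfK ?gt_eqF //.
apply: le_trans (lerD (lerD first_le second_le) third_le) _.
rewrite addrAC [leRHS]addrC lerD2l.
by apply: ler_wpM2l; [exact: ltW | apply: ler_wpM2r; rewrite ?lerDl].
Qed.

End Splitting.
End OperatorNorm.

Section Collocation.
Variables (R : realType) (M : nat) (tau : 'I_M -> R).
Hypotheses (tau_inj : injective tau) (tau_gt0 : forall m, 0 < tau m).

Definition prim (p : {poly R}) : {poly R} :=
  \poly_(i < (size p).+1) (if i is k.+1 then p`_k / k.+1%:R else 0).

Lemma coef_prim p i : (prim p)`_i = if i is k.+1 then p`_k / k.+1%:R else 0.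
Proof.
rewrite coef_poly; case: i => [|i] /=; first by case: (_ < _)%N.
by rewrite ltnS; case: leqP => [size_le|//]; rewrite nth_default // mul0r.
Qed.

Lemma pint_prim p t : pint p t = (prim p).[t].
Proof.
rewrite (horner_coef_wide _ (size_poly _ _)) big_ord_recl coef_prim mul0r add0r.
by apply: eq_bigr => i _; rewrite coef_prim mulrAC.
Qed.

Lemma deriv_prim p : (prim p)^`() = p.
Proof.
apply/polyP => i; rewrite coef_deriv coef_prim.
by rewrite -[in RHS](divfK (_ : i.+1%:R != 0) p`_i) ?mulr_natr ?pnatr_eq0.
Qed.

Lemma lagrange_eval i j : (Defs.lagrange tau j).[tau i] = (i == j)%:R.
Proof.
rewrite horner_prod; have [<-|ij] := eqVneq i j.
  rewrite big1 // => m mi; rewrite hornerM hornerXsubC hornerC mulfV // subr_eq0.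
  by apply: contra_neq mi => /tau_inj.
by rewrite (bigD1 i) //= hornerM hornerXsubC subrr !mul0r.
Qed.

Lemma size_lagrange j : (size (Defs.lagrange tau j) <= M)%N.
Proof.
apply: leq_trans (size_poly_prod_leq _ _) _.
have size_factor m : (size (('X - (tau m)%:P) * (tau j - tau m)^-1%:P)%R <= 2)%N.
  by apply: leq_trans (size_polyMleq _ _) _; rewrite size_XsubC addSn ltnS size_polyC leq_b1.
set s := (\sum_(m | m != j) _)%N.
have : (s <= \sum_(m | m != j) 2)%N by apply: leq_sum => m _; exact: size_factor.
rewrite sum_nat_const cardC1 card_ord.
have : (0 < M)%N by apply: leq_ltn_trans (ltn_ord j).
lia.
Qed.

Lemma collocQ_unit : collocQ tau \in unitmx.
Proof.
rewrite -unitmx_tr -row_free_unit; apply: inj_row_free => u uQ.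
set p := \sum_j u 0 j *: Defs.lagrange tau j.
set P := \sum_j u 0 j *: prim (Defs.lagrange tau j).
have P_tau m : P.[tau m] = 0.
  transitivity ((u *m (collocQ tau)^T) 0 m); last by rewrite uQ mxE.
  rewrite horner_sum mxE.
  by apply: eq_bigr => j _; rewrite hornerZ -pint_prim !mxE.
have P_0 : P.[0] = 0.
  by rewrite horner_sum big1 // => j _; rewrite hornerZ horner_coef0 coef_prim mulr0.
have size_P : (size P <= M.+1)%N.
  apply: leq_trans (size_sum _ _ _) _; apply/bigmax_leqP => j _.
  by rewrite (leq_trans (size_scale_leq _ _)) // (leq_trans (size_poly _ _)) // ltnS size_lagrange.
have P0 : P = 0.
  apply: contraTeq size_P => /max_poly_roots.
  move=> /(_ (0 :: [seq tau m | m <- enum 'I_M])); rewrite -ltnNge /= size_map size_enum_ord.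
  apply.
  - rewrite /root P_0 eqxx /=; apply/allP => _ /mapP[m _ ->]; exact/eqP/P_tau.
  - rewrite map_inj_uniq ?enum_uniq // andbT; apply/mapP => -[m _ tau_m0].
    by have := tau_gt0 m; rewrite -tau_m0 ltxx.
have p0 : p = 0.
  have <- : P^`() = p.
    by rewrite raddf_sum; apply: eq_bigr => j _ /=; rewrite derivZ deriv_prim.
  by rewrite P0 deriv0.
apply/rowP => j; have := congr1 (horner^~ (tau j)) p0.
rewrite horner_sum hornerC (bigD1 j) //= hornerZ lagrange_eval eqxx mulr1 big1 ?addr0 ?mxE //.
by move=> i ij; rewrite hornerZ lagrange_eval eq_sym (negbTE ij) mulr0.
Qed.

End Collocation.

Theorem lemma4 (R : realType) (L M N : nat) (tau : 'I_M -> R)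
  (LQ UQ : 'M[R]_M) (A : 'M[R[i]]_N) (nu : 'cV[R[i]]_(L * M * N) -> R) :
  (0 < L)%N -> (0 < M)%N -> (0 < N)%N ->
  right_radau_nodes tau ->
  (collocQ tau)^T = LQ *m UQ ->
  unit_lower_triangular LQ -> upper_triangular UQ ->
  A \in unitmx ->
  vector_norm nu ->
  let Q := collocQ tau in
  let QD := UQ^T in
  forall k : nat,
  exists c c' mustar : R,
    [/\ 0 < c, 0 <= c', 0 < mustar &
      forall mu : R, mustar <= mu ->
        Phat L QD A mu \in unitmx ->
        opnorm nu (Cmx L Q A mu *m
                   (1%:M - invmx (Phat L QD A mu) *m Cmx L Q A mu) ^+ k)
        <= mu * (c * opnorm nu ((1%:M : 'M[R[i]]_L)
                                *t cmx (1%:M - invmx QD *m Q) ^+ k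
                                *t (1%:M : 'M[R[i]]_N))
                 + c' / mu)].
Proof.
move=> L_gt0 M_gt0 N_gt0 [tau_gt0 tau_lt _ _] QLU _ _ A_unit nu_norm Q QD k.
have n_gt0 : (0 < L * M * N)%N by rewrite !muln_gt0 L_gt0 M_gt0 N_gt0.
have tau_inj : injective tau.
  move=> i j tau_ij; apply/val_inj/eqP; case: ltngtP => // [/tau_lt|/tau_lt];
    by rewrite tau_ij ltxx.
have QD_unit : QD \in unitmx.
  have := collocQ_unit tau_inj tau_gt0.
  by rewrite -unitmx_tr QLU unitmx_mul unitmx_tr => /andP[].
pose I_L : 'M[R[i]]_L := 1%:M; pose I_N : 'M[R[i]]_N := 1%:M.
pose B := I_L *t cmx QD *t A; pose G := I_L *t cmx (invmx QD) *t invmx A.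
pose D := I_L *t cmx Q *t A; pose F := Emx R L *t NMmx R M *t I_N.
have GB : G *m B = 1%:M by rewrite tens1mx_mul -map_mxM !mulVmx // map_mx1 !tensmx11.
have BG : B *m G = 1%:M by rewrite tens1mx_mul -map_mxM !mulmxV // map_mx1 !tensmx11.
have K_eq : 1%:M - G *m D = I_L *t cmx (1%:M - invmx QD *m Q) *t I_N.
  rewrite tens1mx_mul mulVmx // -map_mxM /cmx map_mxB map_mx1.
  by rewrite tensmxBr tensmxBl !tensmx11.
have KX : (1%:M - G *m D) ^+ k = I_L *t cmx (1%:M - invmx QD *m Q) ^+ k *t I_N.
  by rewrite K_eq !tensmxX !expr1n.
have [c [c' [mustar [c_gt0 c'_ge0 mustar_gt0 bound]]]] :=
  splitting_power_estimate n_gt0 nu_norm D F GB BG k.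
exists c, c', mustar; split => // mu mu_ge P_unit.
by rewrite -KX; apply: bound.
Qed.
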